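(* Let $\mathcal{A}$ be a commutative domain of essentially finite type over a field $K$ of arbitrary characteristic, $R$ a subalgebra of $\mathcal{D}(\mathcal{A})$ containing $\mathcal{A}$, and $S$ a multiplicative subset of $\mathcal{A}\setminus\{0\}$. Then $S$ is a (left and right) denominator set of $R$ consisting of regular elements, and $S^{-1}\mathcal{A}\subseteq S^{-1}R\subseteq S^{-1}\mathcal{D}(\mathcal{A})\cong\mathcal{D}(S^{-1}\mathcal{A})$. If, in addition, $S^{-1}R=S^{-1}\mathcal{D}(\mathcal{A})$, then $R$ is an essential left and right $R$-submodule of $\mathcal{D}(\mathcal{A})$.
   Context: Essentially finite type: a localization of a finitely generated commutative $K$-algebra. $\mathcal{D}(\mathcal{A})=\bigcup_{i\ge0}\mathcal{D}(\mathcal{A})_i\subseteq\mathrm{End}_K(\mathcal{A})$ with $\mathcal{D}(\mathcal{A})_{-1}=0$, $\mathcal{D}(\mathcal{A})_i=\{u\mid au-ua\in\mathcal{D}(\mathcal{A})_{i-1}\ \forall a\in\mathcal{A}\}$, $\mathcal{A}=\mathcal{D}(\mathcal{A})_0$. A submodule is essential if it has nonzero intersection with every nonzero submodule. *)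

From HB Require Import structures.
From mathcomp Require Import all_boot all_algebra.
Set Implicit Arguments. Unset Strict Implicit. Unset Printing Implicit Defensive.
Import GRing.Theory.
Local Open Scope ring_scope.

Section Defs.
Variable K : fieldType.

(* Operators on a commutative K-algebra T are functions T -> T; ring
   multiplication of operators is composition, addition is pointwise. *)
Definition zero_op (T : comAlgType K) : T -> T := fun _ => 0.
Definition add_op (T : comAlgType K) (u v : T -> T) : T -> T := fun x => u x + v x.
Definition opp_op (T : comAlgType K) (u : T -> T) : T -> T := fun x => - u x.
Definition scale_op (T : comAlgType K) (k : K) (u : T -> T) : T -> T := fun x => k *: u x.

Definition op_linear (T : comAlgType K) (u : T -> T) : Prop :=
  forall (k : K) (x y : T), u (k *: x + y) = k *: u x + u y.

(* multiplication operator by a : the embedding T = D(T)_0 *)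
Definition mulop (T : comAlgType K) (a : T) : T -> T := fun x => a * x.

Definition comm_op (T : comAlgType K) (a : T) (u : T -> T) : T -> T :=
  fun x => a * u x - u (a * x).

(* diffop_ord T n u  <->  u \in D(T)_n   (with D(T)_{-1} = 0) *)
Fixpoint diffop_ord (T : comAlgType K) (n : nat) (u : T -> T) : Prop :=
  op_linear u /\
  match n with
  | 0 => forall a : T, comm_op a u = @zero_op T
  | n'.+1 => forall a : T, diffop_ord n' (comm_op a u)
  end.

Definition diffop (T : comAlgType K) (u : T -> T) : Prop :=
  exists n, diffop_ord n u.

Definition is_domain (T : comAlgType K) : Prop :=
  forall x y : T, x * y = 0 -> x = 0 \/ y = 0.

Inductive in_gen_subalg (T : comAlgType K) (g : seq T) : T -> Prop :=
  | gen_mem x : x \in g -> in_gen_subalg g x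
  | gen_scal (k : K) : in_gen_subalg g (k%:A)
  | gen_add x y : in_gen_subalg g x -> in_gen_subalg g y -> in_gen_subalg g (x + y)
  | gen_mul x y : in_gen_subalg g x -> in_gen_subalg g y -> in_gen_subalg g (x * y).

(* T is a localization T = Tm^{-1} B of a finitely generated K-algebra B *)
Definition ess_finite_type (T : comAlgType K) : Prop :=
  exists (g : seq T) (Tm : T -> Prop),
    (forall t, Tm t -> in_gen_subalg g t) /\ Tm 1 /\
    (forall t u, Tm t -> Tm u -> Tm (t * u)) /\
    (forall t, Tm t -> exists v, t * v = 1) /\
    (forall a : T, exists b t v, in_gen_subalg g b /\ Tm t /\ t * v = 1 /\ a = b * v).

Definition mult_subset (T : comAlgType K) (S : T -> Prop) : Prop :=
  S 1 /\ (forall s t, S s -> S t -> S (s * t)) /\ ~ S 0.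

Definition subalg_D_containing (T : comAlgType K) (R : (T -> T) -> Prop) : Prop :=
  (forall u, R u -> diffop u) /\
  (forall a : T, R (mulop a)) /\
  (forall u v, R u -> R v -> R (add_op u v)) /\
  (forall u, R u -> R (opp_op u)) /\
  (forall (k : K) u, R u -> R (scale_op k u)) /\
  (forall u v, R u -> R v -> R (u \o v)).

Definition left_denominator (T : comAlgType K) (R : (T -> T) -> Prop) (S : T -> Prop) :=
  (forall s, S s -> R (mulop s)) /\
  (forall s t, S s -> S t -> S (s * t)) /\ S 1 /\
  (forall s r, S s -> R r ->
     exists s' r', S s' /\ R r' /\ mulop s' \o r = r' \o mulop s) /\
  (forall s r, S s -> R r -> r \o mulop s = @zero_op T ->
     exists s', S s' /\ mulop s' \o r = @zero_op T).

Definition right_denominator (T : comAlgType K) (R : (T -> T) -> Prop) (S : T -> Prop) :=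
  (forall s, S s -> R (mulop s)) /\
  (forall s t, S s -> S t -> S (s * t)) /\ S 1 /\
  (forall s r, S s -> R r ->
     exists s' r', S s' /\ R r' /\ r \o mulop s' = mulop s \o r') /\
  (forall s r, S s -> R r -> mulop s \o r = @zero_op T ->
     exists s', S s' /\ r \o mulop s' = @zero_op T).

Definition regular_in (T : comAlgType K) (R : (T -> T) -> Prop) (S : T -> Prop) :=
  forall s r, S s -> R r ->
    (mulop s \o r = @zero_op T -> r = @zero_op T) /\
    (r \o mulop s = @zero_op T -> r = @zero_op T).

Definition is_localization (A L : comAlgType K) (S : A -> Prop) (iota : A -> L) : Prop :=
  (forall x y, iota (x + y) = iota x + iota y) /\
  (forall x y, iota (x * y) = iota x * iota y) /\
  (forall (k : K) x, iota (k *: x) = k *: iota x) /\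
  iota 1 = 1 /\
  (forall x y, iota x = iota y -> x = y) /\
  (forall s, S s -> exists v, iota s * v = 1) /\
  (forall x : L, exists a s v, S s /\ iota s * v = 1 /\ x = iota a * v).

(* phi : D(A) -> D(L) exhibits D(L) = D(S^{-1}A) as the (left and right)
   ring of fractions S^{-1} D(A), compatibly with iota *)
Definition is_diffop_localization (A L : comAlgType K) (S : A -> Prop)
    (iota : A -> L) (phi : (A -> A) -> (L -> L)) : Prop :=
  (forall d, diffop d -> diffop (phi d)) /\
  (forall d, diffop d -> phi d \o iota = iota \o d) /\
  (forall u v, diffop u -> diffop v -> phi (add_op u v) = add_op (phi u) (phi v)) /\
  (forall (k : K) u, diffop u -> phi (scale_op k u) = scale_op k (phi u)) /\
  (forall u v, diffop u -> diffop v -> phi (u \o v) = phi u \o phi v) /\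
  phi id = id /\
  (forall u v, diffop u -> diffop v -> phi u = phi v -> u = v) /\
  (forall s, S s -> exists P, diffop P /\
      P \o phi (mulop s) = id /\ phi (mulop s) \o P = id) /\
  (forall P, diffop P -> exists s d, S s /\ diffop d /\ phi (mulop s) \o P = phi d) /\
  (forall P, diffop P -> exists s d, S s /\ diffop d /\ P \o phi (mulop s) = phi d).

(* S^{-1} R inside D(L) = S^{-1} D(A):  { phi(s)^{-1} phi(r) } *)
Definition loc_left (A L : comAlgType K) (S : A -> Prop) (R : (A -> A) -> Prop)
    (phi : (A -> A) -> (L -> L)) (P : L -> L) : Prop :=
  exists s r, S s /\ R r /\ phi (mulop s) \o P = phi r.

(*  { phi(r) phi(s)^{-1} } *)
Definition loc_right (A L : comAlgType K) (S : A -> Prop) (R : (A -> A) -> Prop)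
    (phi : (A -> A) -> (L -> L)) (P : L -> L) : Prop :=
  exists s r, S s /\ R r /\ P \o phi (mulop s) = phi r.

Definition mulops (A : comAlgType K) (u : A -> A) : Prop := exists a : A, u = mulop a.

Definition left_submod (A : comAlgType K) (R N : (A -> A) -> Prop) : Prop :=
  (forall n, N n -> diffop n) /\ N (@zero_op A) /\
  (forall m n, N m -> N n -> N (add_op m n)) /\
  (forall r n, R r -> N n -> N (r \o n)).

Definition right_submod (A : comAlgType K) (R N : (A -> A) -> Prop) : Prop :=
  (forall n, N n -> diffop n) /\ N (@zero_op A) /\
  (forall m n, N m -> N n -> N (add_op m n)) /\
  (forall r n, R r -> N n -> N (n \o r)).

Definition essential_left (A : comAlgType K) (R : (A -> A) -> Prop) : Prop :=
  left_submod R R /\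
  forall N, left_submod R N -> (exists n, N n /\ n <> @zero_op A) ->
    exists n, N n /\ R n /\ n <> @zero_op A.

Definition essential_right (A : comAlgType K) (R : (A -> A) -> Prop) : Prop :=
  right_submod R R /\
  forall N, right_submod R N -> (exists n, N n /\ n <> @zero_op A) ->
    exists n, N n /\ R n /\ n <> @zero_op A.

End Defs.

(* A differential operator d of order n on A extends uniquely to one on L = S^-1 A, by
   induction on n: once the commutators [a, d] have been extended to operators E a, the
   identity s D(x) = D(s x) + [s, D](x) forces D(b / s) = s^-1 (d b + E s (b / s)), and the
   identities satisfied by the E a make this well defined.  Conversely, as A is essentially
   of finite type, an operator P of order n on L maps A into s^-1 A for a single s in S
   (induction on n, through the commutators of P with finitely many generators), so s P
   restricts to an operator on A: thus D(L) = S^-1 D(A).  The Ore conditions for S in R come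
   from s^(n+1) d = d' s and d s^(n+1) = s d' for d of order n, and regularity from A being a
   domain.  Finally, if S^-1 R = S^-1 D(A), a nonzero n in a submodule N has s n (resp. n s)
   in R for some s in S, and it is nonzero by regularity: R is essential. *)

From HB Require Import structures.
From mathcomp Require Import all_boot all_algebra ring.
From Stdlib Require Import FunctionalExtensionality ClassicalEpsilon.
Set Implicit Arguments. Unset Strict Implicit. Unset Printing Implicit Defensive.
Import GRing.Theory.
Local Open Scope ring_scope.

Local Notation op0 := (@zero_op _ _).

(** * Differential operators *)

Section DifferentialOperators.
Variables (K : fieldType) (T : comAlgType K).
Implicit Types (u v : T -> T) (a b : T) (k : K).

Lemma op_linearD u : op_linear u -> forall x y, u (x + y) = u x + u y.
Proof. by move=> hu x y; have := hu 1 x y; rewrite !scale1r. Qed.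

Lemma op_linear0 u : op_linear u -> u 0 = 0.
Proof. by move=> hu; apply: (@addrI _ (u 0)); rewrite -op_linearD // !addr0. Qed.

Lemma op_linearZ u : op_linear u -> forall k x, u (k *: x) = k *: u x.
Proof. by move=> hu k x; have := hu k x 0; rewrite !addr0 (op_linear0 hu) addr0. Qed.

Lemma op_linearN u : op_linear u -> forall x, u (- x) = - u x.
Proof. by move=> hu x; rewrite -scaleN1r (op_linearZ hu) scaleN1r. Qed.

Lemma op_linearB u : op_linear u -> forall x y, u (x - y) = u x - u y.
Proof. by move=> hu x y; rewrite (op_linearD hu) (op_linearN hu). Qed.

Lemma op_linear_zero : op_linear (@zero_op K T).
Proof. by move=> k x y; rewrite /zero_op scaler0 addr0. Qed.

Lemma op_linear_add u v : op_linear u -> op_linear v -> op_linear (add_op u v).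
Proof. by move=> hu hv k x y; rewrite /add_op hu hv scalerDr addrACA. Qed.

Lemma op_linear_scale k u : op_linear u -> op_linear (scale_op k u).
Proof. by move=> hu c x y; rewrite /scale_op hu scalerDr !scalerA mulrC. Qed.

Lemma op_linear_opp u : op_linear u -> op_linear (opp_op u).
Proof. by move=> hu c x y; rewrite /opp_op hu opprD scalerN. Qed.

Lemma op_linear_comp u v : op_linear u -> op_linear v -> op_linear (u \o v).
Proof. by move=> hu hv c x y /=; rewrite hv hu. Qed.

Lemma op_linear_mulop a : op_linear (mulop a).
Proof. by move=> c x y; rewrite /mulop mulrDr scalerAr. Qed.

Lemma comm_op0 a : comm_op a (@zero_op K T) = op0.
Proof. by apply: functional_extensionality => x; rewrite /comm_op /zero_op mulr0 subr0. Qed.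

Lemma comm_opD a u v : comm_op a (add_op u v) = add_op (comm_op a u) (comm_op a v).
Proof. by apply: functional_extensionality => x; rewrite /comm_op /add_op; ring. Qed.

Lemma comm_opZ a k u : comm_op a (scale_op k u) = scale_op k (comm_op a u).
Proof. by apply: functional_extensionality => x; rewrite /comm_op /scale_op scalerBr scalerAr. Qed.

Lemma comm_opN a u : comm_op a (opp_op u) = opp_op (comm_op a u).
Proof. by apply: functional_extensionality => x; rewrite /comm_op /opp_op; ring. Qed.

Lemma comm_op_comp a u v : op_linear u ->
  comm_op a (u \o v) = add_op (comm_op a u \o v) (u \o comm_op a v).
Proof.
move=> hu; apply: functional_extensionality => x.
by rewrite /comm_op /add_op /= op_linearB //; ring.
Qed.

Lemma comm_opM a b u :
  comm_op (a * b) u = add_op (mulop a \o comm_op b u) (comm_op a u \o mulop b).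
Proof.
by apply: functional_extensionality => x; rewrite /comm_op /add_op /mulop /= mulrA; ring.
Qed.

Lemma comm_op_mulop_eq0 a b : comm_op a (mulop b) = op0.
Proof. by apply: functional_extensionality => x; rewrite /comm_op /mulop /zero_op /=; ring. Qed.

Lemma comp_op0 u : op_linear u -> u \o (@zero_op K T) = op0.
Proof. by move=> hu; apply: functional_extensionality => x; rewrite /= /zero_op op_linear0. Qed.

Lemma mulop1 : mulop (1 : T) = id.
Proof. by apply: functional_extensionality => x; rewrite /mulop mul1r. Qed.

Lemma diffop_ord_linear n u : diffop_ord n u -> op_linear u.
Proof. by case: n => [[]|n []]. Qed.

Lemma diffop_ord_zero n : diffop_ord n (@zero_op K T).
Proof.
by elim: n => [|n IH]; split=> [|a]; rewrite ?comm_op0 //; exact: op_linear_zero.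
Qed.

Lemma diffop_ord_comm n a u : diffop_ord n u -> diffop_ord n.-1 (comm_op a u).
Proof. by case: n => [[_ ->]|n [_ cu]]; [exact: (diffop_ord_zero 0) | exact: cu]. Qed.

Lemma diffop_ord_succ n u : diffop_ord n u -> diffop_ord n.+1 u.
Proof.
elim: n u => [|n IH] u [hu cu]; split=> // a.
  by rewrite cu; exact: diffop_ord_zero.
exact: IH (cu a).
Qed.

Lemma diffop_ord_leq m n u : (m <= n)%N -> diffop_ord m u -> diffop_ord n u.
Proof.
move=> /subnKC <-; elim: (n - m)%N => [|k IH hu]; first by rewrite addn0.
by rewrite addnS; apply/diffop_ord_succ/IH.
Qed.

Lemma diffop_ord_add n u v : diffop_ord n u -> diffop_ord n v -> diffop_ord n (add_op u v).
Proof.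
elim: n u v => [|n IH] u v [hu cu] [hv cv]; split=> [|a]; try exact: op_linear_add.
  by rewrite comm_opD cu cv; apply: functional_extensionality => x; rewrite /add_op /zero_op addr0.
by rewrite comm_opD; exact: IH (cu a) (cv a).
Qed.

Lemma diffop_ord_scale n k u : diffop_ord n u -> diffop_ord n (scale_op k u).
Proof.
elim: n u => [|n IH] u [hu cu]; split=> [|a]; try exact: op_linear_scale.
  by rewrite comm_opZ cu; apply: functional_extensionality => x; rewrite /scale_op /zero_op scaler0.
by rewrite comm_opZ; exact: IH (cu a).
Qed.

Lemma diffop_ord_opp n u : diffop_ord n u -> diffop_ord n (opp_op u).
Proof.
elim: n u => [|n IH] u [hu cu]; split=> [|a]; try exact: op_linear_opp.
  by rewrite comm_opN cu; apply: functional_extensionality => x; rewrite /opp_op /zero_op oppr0.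
by rewrite comm_opN; exact: IH (cu a).
Qed.

Lemma diffop_ord_mulop a : diffop_ord 0 (mulop a).
Proof. by split=> [|b]; rewrite ?comm_op_mulop_eq0 //; exact: op_linear_mulop. Qed.

Lemma diffop_ord_comp m n u v :
  diffop_ord m u -> diffop_ord n v -> diffop_ord (m + n) (u \o v).
Proof.
elim: m u n v => [|m IHm] u n v du; elim: n v => [|n IHn] v dv;
  have [[hu cu] [hv cv]] := (du, dv); split=> [|a]; try exact: op_linear_comp;
  rewrite comm_op_comp // ?cu ?cv ?comp_op0 //.
- by apply: functional_extensionality => x; rewrite /add_op /zero_op addr0.
- by apply: diffop_ord_add; [exact: (diffop_ord_zero n) | exact: IHn (cv a)].
- by apply: diffop_ord_add; [exact: IHm (cu a) dv | exact: diffop_ord_zero].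
- apply: diffop_ord_add; first exact: IHm (cu a) dv.
  by rewrite -addSnnS; exact: IHn (cv a).
Qed.

Lemma diffop_ord_mulop_comp n a u : diffop_ord n u -> diffop_ord n (mulop a \o u).
Proof. exact: (diffop_ord_comp (diffop_ord_mulop a)). Qed.

Lemma diffop_ord_comp_mulop n a u : diffop_ord n u -> diffop_ord n (u \o mulop a).
Proof. by move/diffop_ord_comp/(_ (diffop_ord_mulop a)); rewrite addn0. Qed.

Lemma diffop_ord0_mulop u : diffop_ord 0 u -> u = mulop (u 1).
Proof.
move=> [_ cu]; apply: functional_extensionality => x.
have /eqP := equal_f (cu x) 1; rewrite /comm_op /zero_op /mulop mulr1 subr_eq0.
by move=> /eqP <-; rewrite mulrC.
Qed.

Lemma diffop_add u v : diffop u -> diffop v -> diffop (add_op u v).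
Proof.
move=> [m hu] [n hv]; exists (maxn m n).
by apply: diffop_ord_add; [apply: diffop_ord_leq hu | apply: diffop_ord_leq hv];
  rewrite ?leq_maxl ?leq_maxr.
Qed.

Lemma diffop_scale k u : diffop u -> diffop (scale_op k u).
Proof. by case=> n hu; exists n; exact: diffop_ord_scale. Qed.

Lemma diffop_opp u : diffop u -> diffop (opp_op u).
Proof. by case=> n hu; exists n; exact: diffop_ord_opp. Qed.

Lemma diffop_comp u v : diffop u -> diffop v -> diffop (u \o v).
Proof. by move=> [m hu] [n hv]; exists (m + n)%N; exact: diffop_ord_comp. Qed.

Lemma diffop_mulop a : diffop (mulop a).
Proof. by exists 0%N; exact: diffop_ord_mulop. Qed.

Lemma diffop_comm a u : diffop u -> diffop (comm_op a u).
Proof. by case=> n hu; exists n.-1; exact: diffop_ord_comm. Qed.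

Lemma subalg_D_diffop : subalg_D_containing (@diffop K T).
Proof.
do !split=> //; [exact: diffop_mulop | exact: diffop_add | exact: diffop_opp
  | exact: diffop_scale | exact: diffop_comp].
Qed.

End DifferentialOperators.

Section MultiplicativeSubset.
Variables (K : fieldType) (T : comAlgType K) (S : T -> Prop).
Hypothesis HS : mult_subset S.

Lemma mult_subset1 : S 1.
Proof. by case: HS. Qed.

Lemma mult_subsetM s t : S s -> S t -> S (s * t).
Proof. by case: HS => _ [hM _]; exact: hM. Qed.

Lemma mult_subsetX s n : S s -> S (s ^+ n).
Proof.
move=> Ss; elim: n => [|n IH]; first by rewrite expr0; exact: mult_subset1.
by rewrite exprS; exact: mult_subsetM.
Qed.

Lemma mult_subset_neq0 s : S s -> s != 0.
Proof. by move=> Ss; apply/eqP=> s0; case: HS => _ [_]; rewrite -s0. Qed.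

End MultiplicativeSubset.

(** * Regularity and the Ore conditions *)

Section Regularity.
Variables (K : fieldType) (A : comAlgType K).
Hypothesis Hdom : is_domain A.
Implicit Types (d : A -> A) (s : A).

Lemma mulop_comp_eq0 s d : s != 0 -> mulop s \o d = op0 -> d = op0.
Proof.
move=> s0 h; apply: functional_extensionality => x.
by case: (Hdom (equal_f h x)) => // s00; rewrite s00 eqxx in s0.
Qed.

Lemma comp_mulop_eq0 n d s : diffop_ord n d -> s != 0 -> d \o mulop s = op0 -> d = op0.
Proof.
elim: n d => [|n IH] d hd s0 h.
  rewrite (diffop_ord0_mulop hd) in h *.
  apply: (mulop_comp_eq0 s0); apply: functional_extensionality => x.
  by rewrite /= /mulop mulrCA; have := equal_f h x; rewrite /= /mulop => ->.
have [_ cd] := hd; have ds0 x : d (s * x) = 0 := equal_f h x.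
have cs0 : comm_op s d = op0.
  apply: IH (cd s) s0 _; apply: functional_extensionality => x.
  by rewrite /comm_op /mulop /= !ds0 mulr0 subr0.
apply: (mulop_comp_eq0 s0); apply: functional_extensionality => x.
by have := equal_f cs0 x; rewrite /comm_op /= ds0 subr0.
Qed.

End Regularity.

Section SubalgebraOre.
Variables (K : fieldType) (A : comAlgType K) (R : (A -> A) -> Prop).
Hypothesis HR : subalg_D_containing R.
Implicit Types (d u v : A -> A) (a s : A).

Lemma subalg_diffop u : R u -> diffop u.
Proof. by case: HR => h _; exact: h. Qed.

Lemma subalg_mulop a : R (mulop a).
Proof. by case: HR => _ [h _]; exact: h. Qed.

Lemma subalg_add u v : R u -> R v -> R (add_op u v).
Proof. by case: HR => _ [_ [h _]]; exact: h. Qed.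

Lemma subalg_opp u : R u -> R (opp_op u).
Proof. by case: HR => _ [_ [_ [h _]]]; exact: h. Qed.

Lemma subalg_comp u v : R u -> R v -> R (u \o v).
Proof. by case: HR => _ [_ [_ [_ [_ h]]]]; exact: h. Qed.

Lemma subalg_zero : R op0.
Proof.
have -> : op0 = mulop (0 : A).
  by apply: functional_extensionality => x; rewrite /mulop mul0r.
exact: subalg_mulop.
Qed.

Lemma subalg_comm a u : R u -> R (comm_op a u).
Proof.
move=> Ru; have -> : comm_op a u = add_op (mulop a \o u) (opp_op (u \o mulop a)) by [].
by apply: subalg_add; last apply: subalg_opp; apply: subalg_comp => //; exact: subalg_mulop.
Qed.

(* [s^(n+2) d = s^(n+1) (d s + [s, d])], and [[s, d]] has order [n]. *)
Lemma left_ore_pow n d s : diffop_ord n d -> R d ->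
  exists2 d', R d' & mulop (s ^+ n.+1) \o d = d' \o mulop s.
Proof.
elim: n d => [|n IH] d [_ cd] Rd.
  exists d => //; apply: functional_extensionality => x.
  by have /eqP := equal_f (cd s) x; rewrite /comm_op subr_eq0 expr1 => /eqP.
have [e Re he] := IH _ (cd s) (subalg_comm s Rd).
exists (add_op (mulop (s ^+ n.+1) \o d) e).
  by apply: subalg_add => //; apply: subalg_comp => //; exact: subalg_mulop.
apply: functional_extensionality => x; have := equal_f he x.
by rewrite /comm_op /add_op /mulop /= => <-; rewrite exprS; ring.
Qed.

(* [d s^(n+2) = (s d - [s, d]) s^(n+1)]. *)
Lemma right_ore_pow n d s : diffop_ord n d -> R d ->
  exists2 d', R d' & d \o mulop (s ^+ n.+1) = mulop s \o d'.
Proof.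
elim: n d => [|n IH] d [_ cd] Rd.
  exists d => //; apply: functional_extensionality => x.
  by have /eqP := equal_f (cd s) x; rewrite /comm_op subr_eq0 expr1 eq_sym => /eqP.
have [e Re he] := IH _ (cd s) (subalg_comm s Rd).
exists (add_op (d \o mulop (s ^+ n.+1)) (opp_op e)).
  by apply: subalg_add; [apply: subalg_comp => //; exact: subalg_mulop | exact: subalg_opp].
apply: functional_extensionality => x; have := equal_f he x.
rewrite /comm_op /add_op /opp_op /mulop /= => hex.
rewrite [s ^+ n.+2]exprS -mulrA.
have -> : d (s * (s ^+ n.+1 * x)) = s * d (s ^+ n.+1 * x) - s * e x by rewrite -hex; ring.
ring.
Qed.

End SubalgebraOre.

(** * Extending differential operators to the localization *)

Section UnitCancellation.
Variable R : comPzRingType.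
Implicit Types x y z w : R.

Lemma unit_mulK x w y : x * w = 1 -> x * (w * y) = y.
Proof. by move=> xw; rewrite mulrA xw mul1r. Qed.

Lemma unit_mulI x w y z : x * w = 1 -> x * y = x * z -> y = z.
Proof. by move=> xw e; rewrite -(unit_mulK y xw) mulrCA e mulrCA unit_mulK. Qed.

(* Lets [ring] use the hypothesis [p = q]: it remains to check [x - y = m * (q - p)]. *)
Lemma eq_lin_comb x y p q m : p = q -> x - y = m * (q - p) -> x = y.
Proof. by move=> -> e; apply/eqP; rewrite -subr_eq0 e subrr mulr0. Qed.

End UnitCancellation.

Section Localization.
Variables (K : fieldType) (A L : comAlgType K) (S : A -> Prop) (iota : A -> L).
Hypothesis Hloc : is_localization S iota.
Implicit Types (d : A -> A) (D P : L -> L) (a b c s t : A).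

Lemma iotaD a b : iota (a + b) = iota a + iota b.
Proof. by case: Hloc. Qed.

Lemma iotaM a b : iota (a * b) = iota a * iota b.
Proof. by case: Hloc => _ []. Qed.

Lemma iotaZ k a : iota (k *: a) = k *: iota a.
Proof. by case: Hloc => _ [_ []]. Qed.

Lemma iota1 : iota 1 = 1.
Proof. by case: Hloc => _ [_ [_ []]]. Qed.

Lemma iota_inj : injective iota.
Proof. by case: Hloc => _ [_ [_ [_ []]]]. Qed.

Lemma iota_unit s : S s -> exists v, iota s * v = 1.
Proof. by case: Hloc => _ [_ [_ [_ [_ []]]]] h _; exact: h. Qed.

Lemma iota_frac x : exists a s v, S s /\ iota s * v = 1 /\ x = iota a * v.
Proof. by case: Hloc => _ [_ [_ [_ [_ []]]]]. Qed.

Lemma iota0 : iota 0 = 0.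
Proof. by apply: (@addrI _ (iota 0)); rewrite -iotaD !addr0. Qed.

Lemma iotaN a : iota (- a) = - iota a.
Proof. by apply/eqP; rewrite -subr_eq0 opprK -iotaD addNr iota0. Qed.

Lemma iotaB a b : iota (a - b) = iota a - iota b.
Proof. by rewrite iotaD iotaN. Qed.

Definition extends D d := forall a, D (iota a) = iota (d a).

Lemma extends_eq0 n D : diffop_ord n D -> (forall a, D (iota a) = 0) -> D = op0.
Proof.
elim: n D => [|n IH] D hD D0.
  rewrite (diffop_ord0_mulop hD) -iota1 D0; apply: functional_extensionality => x.
  by rewrite /mulop /zero_op mul0r.
have [_ cD] := hD.
have cD0 a : comm_op (iota a) D = op0.
  by apply: (IH _ (cD (iota a))) => b; rewrite /comm_op -iotaM !D0 mulr0 subr0.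
apply: functional_extensionality => x; have [b [s [v [_ [sv ->]]]]] := iota_frac x.
have := equal_f (cD0 s) (iota b * v).
rewrite /comm_op /zero_op mulrCA sv mulr1 D0 subr0 => sD0.
by apply: (unit_mulI sv); rewrite sD0 mulr0.
Qed.

Lemma extends_uniq D1 D2 d : diffop D1 -> diffop D2 -> extends D1 d -> extends D2 d -> D1 = D2.
Proof.
move=> hD1 hD2 e1 e2; have [n hD] := diffop_add hD1 (diffop_opp hD2).
have /equal_f D12 : add_op D1 (opp_op D2) = op0.
  by apply: extends_eq0 hD _ => a; rewrite /add_op /opp_op e1 e2 subrr.
by apply: functional_extensionality => x; apply/eqP; rewrite -subr_eq0; apply/eqP/D12.
Qed.

Lemma extendsD D1 D2 d1 d2 : extends D1 d1 -> extends D2 d2 ->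
  extends (add_op D1 D2) (add_op d1 d2).
Proof. by move=> e1 e2 a; rewrite /add_op e1 e2 iotaD. Qed.

Lemma extendsN D d : extends D d -> extends (opp_op D) (opp_op d).
Proof. by move=> e a; rewrite /opp_op e iotaN. Qed.

Lemma extendsZ k D d : extends D d -> extends (scale_op k D) (scale_op k d).
Proof. by move=> e a; rewrite /scale_op e iotaZ. Qed.

Lemma extends_comp D1 D2 d1 d2 : extends D1 d1 -> extends D2 d2 ->
  extends (D1 \o D2) (d1 \o d2).
Proof. by move=> e1 e2 a /=; rewrite e2 e1. Qed.

Lemma extends_mulop a : extends (mulop (iota a)) (mulop a).
Proof. by move=> b; rewrite /mulop iotaM. Qed.

Lemma extends_comm D d a : extends D d -> extends (comm_op (iota a) D) (comm_op a d).
Proof. by move=> e b; rewrite /comm_op -iotaM !e iotaB iotaM. Qed.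

Lemma frac_repr x : exists p : A * A * L, iota p.1.2 * p.2 = 1 /\ x = iota p.1.1 * p.2.
Proof. by have [a [s [v [_ h]]]] := iota_frac x; exists (a, s, v). Qed.

(* A chosen representation [x = iota b * v] with [v] inverse to [iota s], as [(b, s, v)]. *)
Definition frac x : A * A * L := proj1_sig (constructive_indefinite_description _ (frac_repr x)).

Lemma fracP x : iota (frac x).1.2 * (frac x).2 = 1 /\ x = iota (frac x).1.1 * (frac x).2.
Proof. exact: proj2_sig (constructive_indefinite_description _ (frac_repr x)). Qed.

Lemma mul_frac x b s v : iota s * v = 1 -> x = iota b * v -> iota s * x = iota b.
Proof. by move=> sv ->; rewrite mulrCA sv mulr1. Qed.

Section Extension.
Variables (n : nat) (d : A -> A) (E : A -> L -> L).
Hypothesis d_linear : op_linear d.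
Hypothesis E_ord : forall a, diffop_ord n (E a).
Hypothesis E_ext : forall a, extends (E a) (comm_op a d).

Let E_diffop a : diffop (E a). Proof. by exists n. Qed.

Lemma E1 : E 1 = op0.
Proof. by apply: (extends_eq0 (E_ord 1)) => b; rewrite E_ext /comm_op !mul1r subrr iota0. Qed.

Lemma EM s t : E (s * t) = add_op (mulop (iota s) \o E t) (E s \o mulop (iota t)).
Proof.
apply: (extends_uniq (d := comm_op (s * t) d)) => //.
  by apply: diffop_add; apply: diffop_comp => //; exact: diffop_mulop.
by rewrite comm_opM; apply: extendsD; apply: extends_comp => //; exact: extends_mulop.
Qed.

Lemma E_swap c s : comm_op (iota c) (E s) = comm_op (iota s) (E c).
Proof.
apply: (extends_uniq (d := comm_op c (comm_op s d))); try exact: diffop_comm.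
  exact: extends_comm.
have -> : comm_op c (comm_op s d) = comm_op s (comm_op c d).
  by apply: functional_extensionality => x; rewrite /comm_op (mulrCA s c x); ring.
exact: extends_comm.
Qed.

(* The extension is forced by [s D(x) = D(s x) + [s, D](x)] for [s x = b]. *)
Definition ext_op x := let: (b, s, v) := frac x in v * (iota (d b) + E s x).

(* Computing [E (s * s') x] in two ways shows independence of the representation. *)
Lemma ext_op_frac x b s v : iota s * v = 1 -> x = iota b * v ->
  ext_op x = v * (iota (d b) + E s x).
Proof.
move=> sv xbv; rewrite /ext_op; move: (fracP x); case: (frac x) => [[b' s'] v'] /= [sv' xbv'].
have xs := mul_frac sv xbv; have xs' := mul_frac sv' xbv'.
have bb : s * b' = s' * b by apply: iota_inj; rewrite !iotaM -xs -xs' mulrCA.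
have key : E (s' * s) x = E (s * s') x by rewrite mulrC.
rewrite !EM /add_op /mulop /= xs xs' !E_ext /comm_op bb !iotaB !iotaM in key.
apply: (@unit_mulI _ (iota (s * s')) (v * v')); first by rewrite iotaM mulrACA sv sv' mulr1.
rewrite iotaM -!mulrA (unit_mulK _ sv') mulrCA (unit_mulK _ sv).
by apply: (eq_lin_comb (m := 1) key); ring.
Qed.

Lemma ext_op_extends : extends ext_op d.
Proof.
move=> a; rewrite (@ext_op_frac _ a 1 1) ?iota1 ?mulr1 //.
by rewrite E1 /zero_op addr0 mul1r.
Qed.

Lemma comm_ext_op c : comm_op (iota c) ext_op = E c.
Proof.
apply: functional_extensionality => x; have [b [s [v [_ [sv xbv]]]]] := iota_frac x.
have xs := mul_frac sv xbv.
have cxbv : iota c * x = iota (c * b) * v by rewrite xbv iotaM mulrA.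
rewrite /comm_op (ext_op_frac sv xbv) (ext_op_frac sv cxbv).
have := equal_f (E_swap c s) x; rewrite /comm_op xs E_ext /comm_op iotaB !iotaM => key.
by rewrite -[E c x]mul1r -sv; apply: (eq_lin_comb (m := - v) key); ring.
Qed.

Lemma ext_op_linear : op_linear ext_op.
Proof.
move=> k x y.
have [b [s [v [_ [sv xbv]]]]] := iota_frac x.
have [b' [s' [v' [_ [sv' ybv']]]]] := iota_frac y.
have ssvv : iota (s * s') * (v * v') = 1 by rewrite iotaM mulrACA sv sv' mulr1.
have x_ss : x = iota (b * s') * (v * v').
  by rewrite xbv iotaM -mulrA (mulrCA (iota s')) sv' mulr1.
have y_ss : y = iota (b' * s) * (v * v').
  by rewrite ybv' iotaM -mulrA (mulrA (iota s)) sv mul1r.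
have xy_ss : k *: x + y = iota (k *: (b * s') + b' * s) * (v * v').
  by rewrite iotaD iotaZ mulrDl -scalerAl -x_ss -y_ss.
rewrite (ext_op_frac ssvv xy_ss) (ext_op_frac ssvv x_ss) (ext_op_frac ssvv y_ss).
rewrite (op_linearD d_linear) (op_linearZ d_linear) (diffop_ord_linear (E_ord _)) iotaD iotaZ.
by rewrite scalerAr -mulrDr scalerDr addrACA.
Qed.

(* For [y = iota c * w] with [w] inverse to [iota t], [[w, D] = - w [iota t, D] w]. *)
Lemma ext_op_ord : diffop_ord n.+1 ext_op.
Proof.
split=> [|y]; first exact: ext_op_linear.
have [c [t [w [_ [tw ->]]]]] := iota_frac y.
have comm_w : comm_op w ext_op = opp_op (mulop w \o E t \o mulop w).
  apply: functional_extensionality => x.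
  have := equal_f (comm_ext_op t) (w * x); rewrite /comm_op (unit_mulK _ tw) => key.
  rewrite /comm_op /opp_op /mulop /= -[ext_op (w * x)]mul1r -tw.
  by apply: (eq_lin_comb (m := w) key); ring.
rewrite comm_opM comm_w comm_ext_op.
apply: diffop_ord_add; last exact/diffop_ord_comp_mulop/E_ord.
exact/diffop_ord_mulop_comp/diffop_ord_opp/diffop_ord_comp_mulop/diffop_ord_mulop_comp/E_ord.
Qed.

End Extension.

Lemma diffop_ord_extend n d : diffop_ord n d -> exists2 D, diffop_ord n D & extends D d.
Proof.
elim: n d => [|n IH] d hd.
  exists (mulop (iota (d 1))); first exact: diffop_ord_mulop.
  by move=> a; rewrite (equal_f (diffop_ord0_mulop hd) a) /mulop iotaM.
have [d_lin cd] := hd.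
have [E hE] := choice (fun a D => diffop_ord n D /\ extends D (comm_op a d))
  (fun a => let: ex_intro2 D hD eD := IH _ (cd a) in ex_intro _ D (conj hD eD)).
have E_ord a : diffop_ord n (E a) by case: (hE a).
have E_ext a : extends (E a) (comm_op a d) by case: (hE a).
by exists (ext_op d E); [exact: ext_op_ord | exact: ext_op_extends].
Qed.

Definition extend_diffop d : L -> L :=
  epsilon (inhabits id) (fun D => diffop D /\ extends D d).

Lemma extend_diffopP d : diffop d -> diffop (extend_diffop d) /\ extends (extend_diffop d) d.
Proof.
case=> n /diffop_ord_extend [D hD eD].
by apply: (epsilon_spec _ (fun D => diffop D /\ extends D d)); exists D; split=> //; exists n.
Qed.

Lemma diffop_extend d : diffop d -> diffop (extend_diffop d).
Proof. by case/extend_diffopP. Qed.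

Lemma extend_diffop_extends d : diffop d -> extends (extend_diffop d) d.
Proof. by case/extend_diffopP. Qed.

Lemma extend_diffop_eq d D : diffop d -> diffop D -> extends D d -> extend_diffop d = D.
Proof. by move=> /extend_diffopP [hE eE] hD; exact: extends_uniq. Qed.

Lemma extend_diffop_mulop a : extend_diffop (mulop a) = mulop (iota a).
Proof.
by apply: extend_diffop_eq; [exact: diffop_mulop | exact: diffop_mulop | exact: extends_mulop].
Qed.

Lemma extend_diffop_id : extend_diffop id = id.
Proof. by rewrite -mulop1 extend_diffop_mulop iota1 mulop1. Qed.

Lemma extend_diffopD (d1 d2 : A -> A) : diffop d1 -> diffop d2 ->
  extend_diffop (add_op d1 d2) = add_op (extend_diffop d1) (extend_diffop d2).
Proof.
move=> hd1 hd2; apply: extend_diffop_eq; first exact: diffop_add.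
  by apply: diffop_add; exact: diffop_extend.
by apply: extendsD; exact: extend_diffop_extends.
Qed.

Lemma extend_diffopN (d1 : A -> A) :
  diffop d1 -> extend_diffop (opp_op d1) = opp_op (extend_diffop d1).
Proof.
move=> hd1; apply: extend_diffop_eq; first exact: diffop_opp.
  by apply: diffop_opp; exact: diffop_extend.
by apply: extendsN; exact: extend_diffop_extends.
Qed.

Lemma extend_diffopZ k (d1 : A -> A) :
  diffop d1 -> extend_diffop (scale_op k d1) = scale_op k (extend_diffop d1).
Proof.
move=> hd1; apply: extend_diffop_eq; first exact: diffop_scale.
  by apply: diffop_scale; exact: diffop_extend.
by apply: extendsZ; exact: extend_diffop_extends.
Qed.

Lemma extend_diffop_comp (d1 d2 : A -> A) : diffop d1 -> diffop d2 ->
  extend_diffop (d1 \o d2) = extend_diffop d1 \o extend_diffop d2.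
Proof.
move=> hd1 hd2; apply: extend_diffop_eq; first exact: diffop_comp.
  by apply: diffop_comp; exact: diffop_extend.
by apply: extends_comp; exact: extend_diffop_extends.
Qed.

Lemma extend_diffop_inj (d1 d2 : A -> A) :
  diffop d1 -> diffop d2 -> extend_diffop d1 = extend_diffop d2 -> d1 = d2.
Proof.
move=> hd1 hd2 e; apply: functional_extensionality => a; apply: iota_inj.
by rewrite -(extend_diffop_extends hd1) -(extend_diffop_extends hd2) e.
Qed.

Lemma op_linear_restrict P : op_linear P -> (forall a, exists b, P (iota a) = iota b) ->
  exists2 f, op_linear f & extends P f.
Proof.
move=> P_lin /(choice (fun a b => P (iota a) = iota b)) [f ef]; exists f => // k x y.
by apply: iota_inj; rewrite -ef iotaD iotaZ P_lin !ef iotaD iotaZ.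
Qed.

Lemma diffop_ord_restrict n P : diffop_ord n P -> (forall a, exists b, P (iota a) = iota b) ->
  exists2 d, diffop_ord n d & extends P d.
Proof.
elim: n P => [|n IH] P hP /(op_linear_restrict (diffop_ord_linear hP)) [f f_lin ef];
  exists f => //; split=> // a.
  apply: functional_extensionality => x; apply: iota_inj.
  by rewrite -(extends_comm a ef) (proj2 hP) /zero_op iota0.
have [d' hd' ed'] := IH _ (proj2 hP (iota a)) (fun b => ex_intro _ _ (extends_comm a ef b)).
suff -> : comm_op a f = d' by [].
by apply: functional_extensionality => x; apply: iota_inj; rewrite -(extends_comm a ef).
Qed.

Section ClearingDenominators.
Hypothesis HS : mult_subset S.

Definition clears_denoms s P := forall a, exists b, iota s * P (iota a) = iota b.

Lemma clears_denomsMl s t P : clears_denoms s P -> clears_denoms (t * s) P.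
Proof. by move=> h a; have [b hb] := h a; exists (t * b); rewrite iotaM -mulrA hb iotaM. Qed.

Lemma common_denominator (F : A -> L -> L) (l : seq A) :
    (forall x, exists2 s, S s & clears_denoms s (F x)) ->
  exists2 s, S s & forall x, x \in l -> clears_denoms s (F x).
Proof.
move=> hF; elim: l => [|x l [s Ss hs]]; first by exists 1; first exact: mult_subset1.
have [t St ht] := hF x; exists (t * s); first exact: mult_subsetM.
move=> y; rewrite in_cons => /predU1P [-> | yl]; last exact/clears_denomsMl/hs.
by rewrite mulrC; exact: clears_denomsMl.
Qed.

Lemma clears_comm_gen_subalg (g : seq A) s P : op_linear P ->
    (forall x, x \in g -> clears_denoms s (comm_op (iota x) P)) ->
  forall x, in_gen_subalg g x -> clears_denoms s (comm_op (iota x) P).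
Proof.
move=> P_lin hg x; elim=> {x} [x xg | k | x y _ hx _ hy | x y _ hx _ hy] a; first exact: hg.
- exists 0; rewrite iota0 /comm_op iotaZ iota1 mulr_algl -scalerAl mul1r.
  by rewrite (op_linearZ P_lin) subrr mulr0.
- have [[bx ebx] [b_y eby]] := (hx a, hy a); exists (bx + b_y).
  by rewrite (iotaD bx) -ebx -eby /comm_op (iotaD x) !mulrDl (op_linearD P_lin); ring.
- have [[bx ebx] [b_y eby]] := (hx (y * a), hy a); exists (x * b_y + bx).
  rewrite (iotaD (x * b_y)) (iotaM x b_y) -ebx -eby iotaM comm_opM /add_op /mulop /=.
  by rewrite (iotaM y a); ring.
Qed.

(* On the subalgebra [B] generated by [g], [P (iota x) = iota x * P 1 - [iota x, P] 1];
   for [a = b / t] over [B], [iota t * P (iota a) = P (iota b) + [iota t, P] (iota a)]. *)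
Lemma clears_denoms_of_comm (g : seq A) P :
    (forall a, exists b t v, in_gen_subalg g b /\ in_gen_subalg g t /\ t * v = 1 /\ a = b * v) ->
    op_linear P ->
    (exists2 s1, S s1 & forall x, x \in g -> clears_denoms s1 (comm_op (iota x) P)) ->
  exists2 s, S s & clears_denoms s P.
Proof.
move=> A_frac P_lin [s1 Ss1 /(clears_comm_gen_subalg P_lin) h1].
have [c0 [s0 [v0 [Ss0 [sv0 P1]]]]] := iota_frac (P 1).
have onB x : in_gen_subalg g x -> exists b, iota (s0 * s1) * P (iota x) = iota b.
  move=> Bx; have [b hb] := h1 x Bx 1; exists (s1 * x * c0 - s0 * b).
  have -> : P (iota x) = iota x * P 1 - comm_op (iota x) P (iota 1).
    by rewrite /comm_op -iotaM mulr1 iota1; ring.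
  rewrite P1 iotaB !iotaM -hb iota1.
  by apply: (eq_lin_comb (m := - (iota s1 * iota x * iota c0)) sv0); rewrite /comm_op; ring.
exists (s0 * s1) => [|a]; first exact: mult_subsetM.
have [b [t [v [Bb [Bt [tv ab]]]]]] := A_frac a.
have [[bt hbt] [bb hbb]] := (h1 t Bt a, onB b Bb).
have tv' : iota t * iota v = 1 by rewrite -iotaM tv iota1.
have ta : t * a = b by rewrite ab mulrCA tv mulr1.
exists (v * (s0 * bt + bb)).
rewrite !iotaM iotaD iotaM -hbt -hbb /comm_op -(iotaM t a) ta (iotaM s0 s1).
by apply: (eq_lin_comb (m := iota s0 * iota s1 * P (iota a)) tv'); ring.
Qed.

Lemma diffop_ord_clears (hA : ess_finite_type A) n P : diffop_ord n P ->
  exists2 s, S s & clears_denoms s P.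
Proof.
have [g [Tm [Tm_gen [_ [_ [_ A_frac]]]]]] := hA.
have A_frac' a : exists b t v, in_gen_subalg g b /\ in_gen_subalg g t /\ t * v = 1 /\ a = b * v.
  by have [b [t [v [Bb [/Tm_gen Bt tv]]]]] := A_frac a; exists b, t, v.
elim: n P => [|n IH] P hP; apply: (clears_denoms_of_comm A_frac' (diffop_ord_linear hP)).
  exists 1 => [|x _ a]; first exact: mult_subset1.
  by exists 0; rewrite (proj2 hP) /zero_op mulr0 iota0.
exact: common_denominator (fun x => IH _ (proj2 hP (iota x))).
Qed.

Lemma diffop_left_frac (hA : ess_finite_type A) P : diffop P ->
  exists s d, S s /\ diffop d /\ extend_diffop (mulop s) \o P = extend_diffop d.
Proof.
case=> n hP; have [s Ss hs] := diffop_ord_clears hA hP.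
have [d hd ed] := diffop_ord_restrict (diffop_ord_mulop_comp (iota s) hP) hs.
exists s, d; split=> //; split; first by exists n.
rewrite extend_diffop_mulop; symmetry; apply: extend_diffop_eq ed; first by exists n.
by exists n; exact: diffop_ord_mulop_comp.
Qed.

Lemma diffop_right_frac (hA : ess_finite_type A) P : diffop P ->
  exists s d, S s /\ diffop d /\ P \o extend_diffop (mulop s) = extend_diffop d.
Proof.
move=> hP; have [s [d [Ss [[n hd] sPd]]]] := diffop_left_frac hA hP.
have [d' hd' ds] := right_ore_pow (@subalg_D_diffop _ A) s hd (ex_intro _ n hd).
have [w sw] := iota_unit Ss.
exists (s ^+ n.+1), d'; split; first exact: mult_subsetX.
split=> //; apply: functional_extensionality => x; apply: (unit_mulI sw).
have := equal_f (congr1 extend_diffop ds) x.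
rewrite (extend_diffop_comp (ex_intro _ n hd) (diffop_mulop _)).
rewrite (extend_diffop_comp (diffop_mulop _) hd') -sPd !extend_diffop_mulop.
by rewrite /= /mulop.
Qed.

Lemma extend_diffop_localization (hA : ess_finite_type A) :
  is_diffop_localization S iota extend_diffop.
Proof.
split; first exact: diffop_extend.
split.
  by move=> d hd; apply: functional_extensionality; exact: extend_diffop_extends.
split; first exact: extend_diffopD.
split; first exact: extend_diffopZ.
split; first exact: extend_diffop_comp.
split; first exact: extend_diffop_id.
split; first exact: extend_diffop_inj.
split; last by split; [exact: diffop_left_frac | exact: diffop_right_frac].
move=> s /iota_unit [w sw]; exists (mulop w); split; first exact: diffop_mulop.
rewrite extend_diffop_mulop; split; apply: functional_extensionality => x /=.
  by rewrite /mulop mulrCA unit_mulK.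
by rewrite /mulop unit_mulK.
Qed.

End ClearingDenominators.

End Localization.

(** * Rings of fractions of R *)

Section Denominators.
Variables (K : fieldType) (A : comAlgType K) (R : (A -> A) -> Prop) (S : A -> Prop).
Hypotheses (Hdom : is_domain A) (HR : subalg_D_containing R) (HS : mult_subset S).

Lemma subalg_regular : regular_in R S.
Proof.
move=> s r Ss Rr; have s0 := mult_subset_neq0 HS Ss; have [n hr] := subalg_diffop HR Rr.
by split; [exact: (mulop_comp_eq0 Hdom s0) | exact: (comp_mulop_eq0 Hdom hr s0)].
Qed.

Lemma subalg_left_ore s r : S s -> R r ->
  exists s' r', S s' /\ R r' /\ mulop s' \o r = r' \o mulop s.
Proof.
move=> Ss Rr; have [n hr] := subalg_diffop HR Rr; have [r' Rr' e] := left_ore_pow HR s hr Rr.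
by exists (s ^+ n.+1), r'; split; first exact: mult_subsetX.
Qed.

Lemma subalg_right_ore s r : S s -> R r ->
  exists s' r', S s' /\ R r' /\ r \o mulop s' = mulop s \o r'.
Proof.
move=> Ss Rr; have [n hr] := subalg_diffop HR Rr; have [r' Rr' e] := right_ore_pow HR s hr Rr.
by exists (s ^+ n.+1), r'; split; first exact: mult_subsetX.
Qed.

Lemma subalg_left_denominator : left_denominator R S.
Proof.
split=> [s _|]; first exact: (subalg_mulop HR).
split; first exact: mult_subsetM.
split; first exact: mult_subset1.
split; first exact: subalg_left_ore.
move=> s r Ss Rr /(proj2 (subalg_regular Ss Rr)) ->.
exists 1; split; first exact: mult_subset1.
by apply: functional_extensionality => x; rewrite /= /mulop /zero_op mulr0.
Qed.

Lemma subalg_right_denominator : right_denominator R S.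
Proof.
split=> [s _|]; first exact: (subalg_mulop HR).
split; first exact: mult_subsetM.
split; first exact: mult_subset1.
split; first exact: subalg_right_ore.
move=> s r Ss Rr /(proj1 (subalg_regular Ss Rr)) ->.
by exists 1; split; first exact: mult_subset1.
Qed.

End Denominators.

Section Fractions.
Variables (K : fieldType) (A L : comAlgType K) (S : A -> Prop) (iota : A -> L).
Variable R : (A -> A) -> Prop.
Hypotheses (Hloc : is_localization S iota) (HR : subalg_D_containing R) (HS : mult_subset S).
Implicit Types (r : A -> A) (P Q : L -> L) (s : A).

Local Notation phi := (extend_diffop iota).
Let phi_comp := extend_diffop_comp Hloc.
Let phi_mulop := extend_diffop_mulop Hloc.

Lemma extend_mulop_invl s P Q : S s -> phi (mulop s) \o P = Q ->
  exists2 w, iota s * w = 1 & P = mulop w \o Q.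
Proof.
move=> /(iota_unit Hloc) [w sw] <-; exists w => //.
rewrite phi_mulop; apply: functional_extensionality => x.
by rewrite /= /mulop mulrCA unit_mulK.
Qed.

Lemma extend_mulop_invr s P Q : S s -> P \o phi (mulop s) = Q ->
  exists2 w, iota s * w = 1 & P = Q \o mulop w.
Proof.
move=> /(iota_unit Hloc) [w sw] <-; exists w => //.
by rewrite phi_mulop; apply: functional_extensionality => x; rewrite /= /mulop unit_mulK.
Qed.

Lemma loc_left_right P : loc_left S R phi P -> loc_right S R phi P.
Proof.
move=> [s [r [Ss [Rr /(extend_mulop_invl Ss) [w sw ->]]]]].
have [s' [r' [Ss' [Rr' e]]]] := subalg_right_ore HR HS Ss Rr.
exists s', r'; split=> //; split=> //.
have [hr hr'] := (subalg_diffop HR Rr, subalg_diffop HR Rr').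
have := congr1 phi e.
rewrite (phi_comp hr (diffop_mulop s')) (phi_comp (diffop_mulop s) hr').
rewrite !phi_mulop => e'; apply: functional_extensionality => x.
have := equal_f e' x; rewrite /mulop /= => ->.
by rewrite mulrCA unit_mulK.
Qed.

Lemma loc_right_left P : loc_right S R phi P -> loc_left S R phi P.
Proof.
move=> [s [r [Ss [Rr /(extend_mulop_invr Ss) [w sw ->]]]]].
have [s' [r' [Ss' [Rr' e]]]] := subalg_left_ore HR HS Ss Rr.
exists s', r'; split=> //; split=> //.
have [hr hr'] := (subalg_diffop HR Rr, subalg_diffop HR Rr').
have := congr1 phi e.
rewrite (phi_comp (diffop_mulop s') hr) (phi_comp hr' (diffop_mulop s)).
rewrite !phi_mulop => e'; apply: functional_extensionality => x.
by have := equal_f e' (w * x); rewrite /mulop /= unit_mulK.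
Qed.

Lemma loc_left_mulops P : loc_left S (@mulops K A) phi P -> loc_left S R phi P.
Proof.
by move=> [s [r [Ss [[a ->] e]]]]; exists s, (mulop a); do !split=> //; exact: subalg_mulop.
Qed.

Lemma loc_left_diffop P : loc_left S R phi P -> diffop P.
Proof.
move=> [s [r [Ss [Rr /(extend_mulop_invl Ss) [w _ ->]]]]].
by apply: diffop_comp; [exact: diffop_mulop | exact/(diffop_extend Hloc)/(subalg_diffop HR)].
Qed.

Lemma loc_left_id : loc_left S R phi id.
Proof.
exists 1, (mulop 1); split; first exact: mult_subset1.
by split; [exact: (subalg_mulop HR) | rewrite mulop1 (extend_diffop_id Hloc)].
Qed.

Lemma loc_left_add P Q : loc_left S R phi P -> loc_left S R phi Q -> loc_left S R phi (add_op P Q).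
Proof.
move=> [s [r [Ss [Rr e]]]] [t [r' [St [Rr' e']]]].
exists (s * t), (add_op (mulop t \o r) (mulop s \o r')); split; first exact: mult_subsetM.
split; first by apply: (subalg_add HR); apply: (subalg_comp HR) => //; exact: (subalg_mulop HR).
have [hr hr'] := (subalg_diffop HR Rr, subalg_diffop HR Rr').
have [htr hsr'] := (diffop_comp (diffop_mulop t) hr, diffop_comp (diffop_mulop s) hr').
rewrite (extend_diffopD Hloc htr hsr') (phi_comp (diffop_mulop t) hr).
rewrite (phi_comp (diffop_mulop s) hr') !phi_mulop.
rewrite !phi_mulop in e e'; apply: functional_extensionality => x.
have [ePx eQx] := (equal_f e x, equal_f e' x); rewrite /add_op /mulop /= in ePx eQx *.
by rewrite -ePx -eQx (iotaM Hloc); ring.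
Qed.

Lemma loc_left_opp P : loc_left S R phi P -> loc_left S R phi (opp_op P).
Proof.
move=> [s [r [Ss [Rr e]]]]; exists s, (opp_op r); split=> //; split; first exact: (subalg_opp HR).
rewrite (extend_diffopN Hloc (subalg_diffop HR Rr)).
rewrite phi_mulop in e *; apply: functional_extensionality => x.
by rewrite /opp_op /mulop /= -(equal_f e x) mulrN.
Qed.

Lemma loc_left_comp P Q : loc_left S R phi P -> loc_left S R phi Q -> loc_left S R phi (P \o Q).
Proof.
move=> [s [r [Ss [Rr e]]]] [t [r' [St [Rr' e']]]].
have [t' [r'' [St' [Rr'' e'']]]] := subalg_left_ore HR HS St Rr.
exists (t' * s), (r'' \o r'); split; first exact: mult_subsetM.
split; first exact: (subalg_comp HR).
have [hr hr'] := (subalg_diffop HR Rr, subalg_diffop HR Rr'); have hr'' := subalg_diffop HR Rr''.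
have := congr1 phi e''.
rewrite (phi_comp (diffop_mulop t') hr) (phi_comp hr'' (diffop_mulop t)).
rewrite (phi_comp hr'' hr').
rewrite !phi_mulop in e e' * => e3; apply: functional_extensionality => x.
have := equal_f e (Q x); have := equal_f e' x; have := equal_f e3 (Q x).
by rewrite /mulop /= (iotaM Hloc) -mulrA => e3x e'x ex; rewrite ex e3x e'x.
Qed.

Hypothesis Hdom : is_domain A.

Lemma subalg_left_submod : left_submod R R.
Proof.
split; first exact: subalg_diffop.
split; first exact: (subalg_zero HR).
by split; [exact: (subalg_add HR) | exact: (subalg_comp HR)].
Qed.

Lemma subalg_right_submod : right_submod R R.
Proof.
split; first exact: subalg_diffop.
split; first exact: (subalg_zero HR).
by split=> [|r n Rr Rn]; [exact: (subalg_add HR) | exact: (subalg_comp HR)].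
Qed.

Hypothesis full : forall P, diffop P -> loc_left S R phi P.

Lemma subalg_essential_left : essential_left R.
Proof.
split=> [|N [Nd [_ [_ NR]]] [n [Nn n0]]]; first exact: subalg_left_submod.
have hn := Nd n Nn; have [s [r [Ss [Rr e]]]] := full (diffop_extend Hloc hn).
have sn : mulop s \o n = r.
  apply: (extend_diffop_inj Hloc (diffop_comp (diffop_mulop s) hn) (subalg_diffop HR Rr)).
  by rewrite (phi_comp (diffop_mulop s) hn).
exists r; split; first by rewrite -sn; apply: NR => //; exact: (subalg_mulop HR).
by split=> // r0; apply/n0/(mulop_comp_eq0 Hdom (mult_subset_neq0 HS Ss)); rewrite sn.
Qed.

Lemma subalg_essential_right : essential_right R.
Proof.
split=> [|N [Nd [_ [_ NR]]] [n [Nn n0]]]; first exact: subalg_right_submod.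
have hn := Nd n Nn; have [s [r [Ss [Rr e]]]] := loc_left_right (full (diffop_extend Hloc hn)).
have ns : n \o mulop s = r.
  apply: (extend_diffop_inj Hloc (diffop_comp hn (diffop_mulop s)) (subalg_diffop HR Rr)).
  by rewrite (phi_comp hn (diffop_mulop s)).
exists r; split; first by rewrite -ns; apply: NR => //; exact: (subalg_mulop HR).
have [k hk] := hn.
by split=> // r0; apply/n0/(comp_mulop_eq0 Hdom hk (mult_subset_neq0 HS Ss)); rewrite ns.
Qed.

End Fractions.

Theorem lemma3p3 (K : fieldType) (A : comAlgType K)
    (R : (A -> A) -> Prop) (S : A -> Prop) :
  is_domain A -> ess_finite_type A ->
  subalg_D_containing R -> mult_subset S ->
  (* S is a left and right denominator set of R of regular elements *)
  (left_denominator R S /\ right_denominator R S /\ regular_in R S) /\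
  (* for the localization L = S^{-1}A:
     S^{-1}A <= S^{-1}R <= S^{-1}D(A) ~= D(S^{-1}A), and the final claim *)
  (forall (L : comAlgType K) (iota : A -> L), is_localization S iota ->
    exists phi : (A -> A) -> (L -> L),
      is_diffop_localization S iota phi /\
      (forall P, loc_left S R phi P <-> loc_right S R phi P) /\
      (forall P, loc_left S (@mulops K A) phi P -> loc_left S R phi P) /\
      (forall P, loc_left S R phi P -> diffop P) /\
      loc_left S R phi id /\
      (forall P Q, loc_left S R phi P -> loc_left S R phi Q ->
         loc_left S R phi (add_op P Q)) /\
      (forall P, loc_left S R phi P -> loc_left S R phi (opp_op P)) /\
      (forall P Q, loc_left S R phi P -> loc_left S R phi Q ->
         loc_left S R phi (P \o Q)) /\
      ((forall P, diffop P -> loc_left S R phi P) ->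
         essential_left R /\ essential_right R)).
Proof.
move=> Hdom HA HR HS; split.
  split; first exact: subalg_left_denominator.
  by split; [exact: subalg_right_denominator | exact: subalg_regular].
move=> L iota Hloc; exists (extend_diffop iota).
split; first exact: extend_diffop_localization.
split; first by move=> P; split; [exact: loc_left_right | exact: loc_right_left].
split; first by move=> P; exact: loc_left_mulops.
split; first by move=> P; exact: loc_left_diffop.
split; first exact: loc_left_id.
split; first by move=> P Q; exact: loc_left_add.
split; first by move=> P; exact: loc_left_opp.
split; first by move=> P Q; exact: loc_left_comp.
move=> full; split; first exact: (subalg_essential_left Hloc HR HS Hdom full).
exact: (subalg_essential_right Hloc HR HS Hdom full).
Qed.
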